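(* For every $\varepsilon>0$ there exists $N=N(\varepsilon,\Omega)>0$ such that for every $n>N$, every probability measure $\mu\in\mathcal P(\Omega^n)$ and every partition $\vec V_0$ of $[n]$ of size $\#\vec V_0\le 1/\varepsilon$ the following holds: there exist a partition $\vec V$ of $[n]$ refining $\vec V_0$ and a partition $\vec S$ of $\Omega^n$ such that $\#\vec V+\#\vec S\le N$ and $\mu$ is $\varepsilon$-homogeneous with respect to $(\vec V,\vec S)$.
   Context: $\Omega$ is a fixed finite nonempty set and $\mathcal P(\mathcal X)$ denotes the set of probability measures on a finite set $\mathcal X$; $\|\cdot\|_{TV}$ is the total variation norm. For $\sigma\in\Omega^n$, nonempty $S\subset[n]$ and $\omega\in\Omega$ let $\sigma[\omega|S]=|\sigma^{-1}(\omega)\cap S|/|S|$, so $\sigma[\cdot|S]\in\mathcal P(\Omega)$. For $\mu\in\mathcal P(\Omega^n)$ and $X:\Omega^n\to\mathbb R$, $\langle X(\boldsymbol\sigma)\rangle_\mu=\sum_\sigma\mu(\sigma)X(\sigma)$; for $A\subset\Omega^n$ with $\mu(A)>0$, $\mu[\cdot|A]$ is the conditional measure. The size $\#\vec V$ of a partition $\vec V=(V_1,\dots,V_k)$ is $k$; $\vec W$ refines $\vec V$ if every class of $\vec W$ is contained in a class of $\vec V$. $\mu$ is $\varepsilon$-regular on $U\subset[n]$ if for every $S\subset U$ with $|S|\ge\varepsilon|U|$ we have $\langle\|\boldsymbol\sigma[\cdot|S]-\boldsymbol\sigma[\cdot|U]\|_{TV}\rangle_\mu<\varepsilon$. $\mu$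 is $\varepsilon$-regular with respect to a partition $\vec V$ of $[n]$ if there is $J\subset[\#\vec V]$ with $\sum_{i\notin J}|V_i|<\varepsilon n$ such that $\mu$ is $\varepsilon$-regular on $V_i$ for all $i\in J$. For a partition $\vec V$ of $[n]$ and a partition $\vec S$ of $\Omega^n$, $\mu$ is $\varepsilon$-homogeneous with respect to $(\vec V,\vec S)$ if there is $I\subset[\#\vec S]$ such that: (HM1) $\mu(S_i)>0$ for all $i\in I$ and $\sum_{i\notin I}\mu(S_i)<\varepsilon$; (HM2) for all $i\in[\#\vec S]$, $j\in[\#\vec V]$: $\max_{\sigma,\sigma'\in S_i}\|\sigma[\cdot|V_j]-\sigma'[\cdot|V_j]\|_{TV}<\varepsilon$; (HM3) for all $i\in I$, $\mu[\cdot|S_i]$ is $\varepsilon$-regular with respect to $\vec V$; (HM4) $\mu$ is $\varepsilon$-regular with respect to $\vec V$. *)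

From HB Require Import structures.
From mathcomp Require Import all_boot all_order all_algebra.
From mathcomp Require Import reals.
Set Implicit Arguments. Unset Strict Implicit. Unset Printing Implicit Defensive.
Import Order.TTheory GRing.Theory Num.Theory.
Local Open Scope ring_scope.

Section Defs.
Variables (R : realType) (Omega : finType) (n : nat).

Definition config := {ffun 'I_n -> Omega}.

Definition is_prob (X : finType) (mu : {ffun X -> R}) : Prop :=
  (forall x, 0 <= mu x) /\ \sum_x mu x = 1.

(* total variation distance: ||p - q||_TV = (1/2) sum |p - q| = max_A |p(A)-q(A)| *)
Definition tv (p q : {ffun Omega -> R}) : R :=
  2^-1 * \sum_w `|p w - q w|.

Definition emp (sigma : config) (S : {set 'I_n}) : {ffun Omega -> R} :=
  [ffun w => #|[set i in S | sigma i == w]|%:R / #|S|%:R].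

Definition expect (mu : {ffun config -> R}) (X : config -> R) : R :=
  \sum_sigma mu sigma * X sigma.

Definition measure_of (mu : {ffun config -> R}) (A : {set config}) : R :=
  \sum_(sigma in A) mu sigma.

Definition cond (mu : {ffun config -> R}) (A : {set config}) : {ffun config -> R} :=
  [ffun sigma => (if sigma \in A then mu sigma else 0) / measure_of mu A].

Definition regular_on (eps : R) (mu : {ffun config -> R}) (U : {set 'I_n}) : Prop :=
  forall S : {set 'I_n}, S \subset U -> eps * #|U|%:R <= #|S|%:R ->
    expect mu (fun sigma => tv (emp sigma S) (emp sigma U)) < eps.

Definition regular_wrt (eps : R) (mu : {ffun config -> R}) (V : {set {set 'I_n}}) : Prop :=
  exists J : {set {set 'I_n}}, J \subset V /\
    (\sum_(B in V :\: J) #|B|%:R < eps * n%:R) /\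
    (forall B, B \in J -> regular_on eps mu B).

Definition refines (T : finType) (W V : {set {set T}}) : Prop :=
  forall B, B \in W -> exists2 C, C \in V & B \subset C.

Definition homogeneous (eps : R) (mu : {ffun config -> R})
    (V : {set {set 'I_n}}) (S : {set {set config}}) : Prop :=
  exists I : {set {set config}}, I \subset S /\
    ((forall A, A \in I -> 0 < measure_of mu A) /\
     \sum_(A in S :\: I) measure_of mu A < eps) /\
    (forall A B, A \in S -> B \in V ->
       forall sigma sigma', sigma \in A -> sigma' \in A ->
         tv (emp sigma B) (emp sigma' B) < eps) /\
    (forall A, A \in I -> regular_wrt eps (cond mu A) V) /\
    regular_wrt eps mu V.

End Defs.

(* The proof is an energy increment argument.  For a partition V of [n], the
   energy of sigma is the sum over i of the squared l2-norm of the empirical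
   distribution of sigma on the class of i; it lies in [0, n |Omega|] and does
   not decrease when V is refined.  Rounding the empirical distributions on the
   classes of V to multiples of 1/M yields a partition S of Omega^n with HM2.
   If HM1/HM3 or HM4 fail, then mu or a positive mass of conditionals mu[.|A],
   A in S, has irregular classes of total size at least eps n, each with a
   witness subset; refining V by all witnesses increases the expected energy by
   a fixed multiple of n (Cauchy-Schwarz), so that after a bounded number of
   rounds the pair (V, S) is homogeneous. *)

From HB Require Import structures.
From mathcomp Require Import all_boot all_order all_algebra.
From mathcomp Require Import reals ring lra.
Import Order.TTheory GRing.Theory Num.Theory.
Local Open Scope ring_scope.
Set Implicit Arguments. Unset Strict Implicit. Unset Printing Implicit Defensive.

Section SumInequalities.
Variable R : realFieldType.

Lemma sqr_wsum_le (I : finType) (P : pred I) (w x : I -> R) :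
  (forall i, P i -> 0 <= w i) ->
  (\sum_(i | P i) w i * x i) ^+ 2 <=
    (\sum_(i | P i) w i) * \sum_(i | P i) w i * x i ^+ 2.
Proof.
move=> w_ge0.
set W := \sum_(i | P i) w i; set S1 := \sum_(i | P i) w i * x i.
set S2 := \sum_(i | P i) w i * x i ^+ 2.
have W_ge0 : 0 <= W by apply: sumr_ge0.
have [W0 | W_neq0] := eqVneq W 0.
  have w0 := psumr_eq0P w_ge0 W0.
  by rewrite /S1 big1 ?expr0n ?W0 ?mul0r // => i Pi; rewrite w0 // mul0r.
set m := S1 / W.
have var_ge0 : 0 <= \sum_(i | P i) w i * (x i - m) ^+ 2.
  by apply: sumr_ge0 => i Pi; rewrite mulr_ge0 ?sqr_ge0 ?w_ge0.
have var_eq : \sum_(i | P i) w i * (x i - m) ^+ 2 = S2 - 2 * m * S1 + m ^+ 2 * W.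
  rewrite (eq_bigr (fun i => w i * x i ^+ 2 - 2 * m * (w i * x i) + m ^+ 2 * w i));
    last by move=> i _; ring.
  by rewrite big_split /= sumrB -!mulr_sumr.
rewrite var_eq in var_ge0.
have : 0 <= W * (S2 - 2 * m * S1 + m ^+ 2 * W) by rewrite mulr_ge0.
have -> : W * (S2 - 2 * m * S1 + m ^+ 2 * W) = W * S2 - S1 ^+ 2.
  by rewrite /m; field.
by rewrite subr_ge0.
Qed.

Lemma sqr_sum_le_card (I : finType) (A : {pred I}) (x : I -> R) :
  (\sum_(i in A) x i) ^+ 2 <= #|A|%:R * \sum_(i in A) x i ^+ 2.
Proof.
have := @sqr_wsum_le I (mem A) (fun _ => 1) x (fun _ _ => ler01).
rewrite sumr_const.
under eq_bigr do rewrite mul1r.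
by under [X in _ <= _ * X]eq_bigr do rewrite mul1r.
Qed.

Lemma ler_sum_subset (I : finType) (A B : {set I}) (F : I -> R) :
  A \subset B -> (forall i, 0 <= F i) -> \sum_(i in A) F i <= \sum_(i in B) F i.
Proof.
move=> AB F_ge0; rewrite [X in _ <= X](bigID (mem A)) /=.
rewrite [X in _ <= X + _](eq_bigl (mem A)); last first.
  by move=> i /=; case iA: (i \in A); rewrite ?andbF ?andbT //= (subsetP AB).
by rewrite lerDl sumr_ge0.
Qed.

End SumInequalities.

Lemma card_preim_partition (T rT : finType) (f : T -> rT) (D : {set T}) :
  (#|preim_partition f D| <= #|f @: D|)%N.
Proof.
rewrite /preim_partition /equivalence_partition.
have -> : [set [set y in D | f x == f y] | x in D] =
    [set [set y in D | v == f y] | v in f @: D] by rewrite -imset_comp.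
exact: leq_imset_card.
Qed.

Lemma refines_trans (T : finType) (A B C : {set {set T}}) :
  refines A B -> refines B C -> refines A C.
Proof.
move=> AB BC X XA; have [Y YB XY] := AB X XA; have [Z ZC YZ] := BC Y YB.
by exists Z => //; apply: subset_trans XY YZ.
Qed.

Section Empirical.
Variables (R : realType) (Omega : finType) (n : nat).
Notation cfg := (config Omega n).
Notation emp := (emp R).
Implicit Types (s : cfg) (C : {set 'I_n}) (w : Omega).

Definition occ s C w : R :=
  \sum_(i in C) (s i == w)%:R.

Lemma occ_le_card s C w : occ s C w <= #|C|%:R.
Proof. by rewrite -sum1_card natr_sum; apply: ler_sum => i _; case: eqP. Qed.

Lemma mulr_card_emp s C w : #|C|%:R * emp s C w = occ s C w.
Proof.
have card_occ : #|[set i in C | s i == w]|%:R = occ s C w.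
  rewrite /occ (eq_bigr (fun i => if s i == w then 1 else 0)); last by move=> i _; case: eqP.
  by rewrite -big_mkcondr /= -sum1_card natr_sum; apply: eq_bigl => i; rewrite inE.
rewrite /emp ffunE card_occ; have [C0 | C_gt0] := posnP #|C|.
  by rewrite C0 mul0r /occ big_pred0 // => i; rewrite (card0_eq C0).
by rewrite mulrC divfK // pnatr_eq0 -lt0n.
Qed.

Lemma emp_ge0 s C w : 0 <= emp s C w.
Proof. by rewrite /emp ffunE divr_ge0. Qed.

Lemma emp_le1 s C w : emp s C w <= 1.
Proof.
have [C0 | C_gt0] := posnP #|C|; first by rewrite /emp ffunE C0 invr0 mulr0.
have C_gt0' : (0 : R) < #|C|%:R by rewrite ltr0n.
by rewrite -(ler_pM2l C_gt0') mulr1 mulr_card_emp occ_le_card.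
Qed.

Lemma sum_partition (V : {set {set 'I_n}}) (F : 'I_n -> R) :
  partition V [set: 'I_n] -> \sum_i F i = \sum_(B in V) \sum_(i in B) F i.
Proof.
move=> /and3P[/eqP covV tV _]; rewrite -big_trivIset //.
by apply: eq_bigl => i; rewrite covV inE.
Qed.

Lemma sum_emp_blocks (P : {set {set 'I_n}}) (T : {set 'I_n}) (s : cfg) w :
  partition P [set: 'I_n] -> (forall i, i \in T -> pblock P i \subset T) ->
  \sum_(i in T) emp s (pblock P i) w = occ s T w.
Proof.
move=> /and3P[/eqP covP tP _] PT.
set PT' := [set C in P | C \subset T].
have tPT' : trivIset PT'.
  by apply: trivIsetS tP; apply/subsetP => C; rewrite inE => /andP[].
have covPT' : cover PT' = T.
  apply/setP => i; apply/bigcupP/idP => [[C]|iT].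
    by rewrite inE => /andP[_ CT] iC; exact: (subsetP CT).
  exists (pblock P i); last by rewrite mem_pblock covP inE.
  by rewrite inE pblock_mem ?covP ?inE // PT.
rewrite -covPT' /occ !big_trivIset //; apply: eq_bigr => C; rewrite inE => /andP[CP _].
rewrite (eq_bigr (fun _ => emp s C w)); last by move=> i iC; rewrite (def_pblock tP CP iC).
by rewrite sumr_const -mulr_natl mulr_card_emp.
Qed.

Lemma tv_sqr_le (p q : {ffun Omega -> R}) :
  4 * tv p q ^+ 2 <= #|Omega|%:R * \sum_w (p w - q w) ^+ 2.
Proof.
have sqr_abs : \sum_w `|p w - q w| ^+ 2 = \sum_w (p w - q w) ^+ 2.
  by apply: eq_bigr => w _; rewrite real_normK ?num_real.
rewrite -sqr_abs; apply: le_trans (@sqr_sum_le_card _ _ Omega (fun w => `|p w - q w|)).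
by rewrite /tv le_eqVlt; apply/orP; left; apply/eqP; field.
Qed.

End Empirical.

Section Expectation.
Variables (R : realType) (Omega : finType) (n : nat).
Notation cfg := (config Omega n).
Implicit Types (nu : {ffun cfg -> R}) (X Y : cfg -> R).

Lemma expect_ge0 nu X :
  (forall s, 0 <= nu s) -> (forall s, 0 <= X s) -> 0 <= expect nu X.
Proof. by move=> nu_ge0 X_ge0; apply: sumr_ge0 => s _; rewrite mulr_ge0. Qed.

Lemma ler_expect nu X Y :
  (forall s, 0 <= nu s) -> (forall s, X s <= Y s) -> expect nu X <= expect nu Y.
Proof. by move=> nu_ge0 XY; apply: ler_sum => s _; rewrite ler_wpM2l. Qed.

Lemma expectZ nu c X : expect nu (fun s => c * X s) = c * expect nu X.
Proof. by rewrite /expect mulr_sumr; apply: eq_bigr => s _; ring. Qed.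

Lemma expectB nu X Y :
  expect nu (fun s => X s - Y s) = expect nu X - expect nu Y.
Proof. by rewrite /expect -sumrB; apply: eq_bigr => s _; ring. Qed.

Lemma expect_sum nu (I : finType) (P : pred I) (F : I -> cfg -> R) :
  expect nu (fun s => \sum_(i | P i) F i s) = \sum_(i | P i) expect nu (F i).
Proof. by rewrite /expect exchange_big /=; apply: eq_bigr => s _; rewrite mulr_sumr. Qed.

Lemma sqr_expect_le nu X : is_prob nu -> expect nu X ^+ 2 <= expect nu (fun s => X s ^+ 2).
Proof.
by case=> nu_ge0 nu1; have := @sqr_wsum_le _ _ predT (fun s => nu s) X (fun s _ => nu_ge0 s); rewrite nu1 mul1r.
Qed.

Lemma cond_is_prob nu A :
  (forall s, 0 <= nu s) -> 0 < measure_of nu A -> is_prob (cond nu A).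
Proof.
move=> nu_ge0 mA; split => [s|].
  by rewrite /cond ffunE; apply: divr_ge0; [case: ifP | exact: ltW].
under eq_bigr do rewrite /cond ffunE.
by rewrite -mulr_suml -big_mkcond divff // gt_eqF.
Qed.

Lemma sum_measure_expect_cond nu (S : {set {set cfg}}) (P : pred {set cfg}) X :
  (forall s, 0 <= nu s) -> (forall s, 0 <= X s) -> partition S [set: cfg] ->
  \sum_(A in S | P A) measure_of nu A * expect (cond nu A) X <= expect nu X.
Proof.
move=> nu_ge0 X_ge0 /and3P[/eqP covS tS _].
have term_ge0 A : 0 <= \sum_(s in A) nu s * X s by apply: sumr_ge0 => s _; rewrite mulr_ge0.
apply: le_trans (_ : \sum_(A in S | P A) \sum_(s in A) nu s * X s <= _).
  apply: ler_sum => A _.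
  have [-> | mA] := eqVneq (measure_of nu A) 0; first by rewrite mul0r.
  rewrite /expect mulr_sumr [X in _ <= X]big_mkcond /=; apply: ler_sum => s _.
  rewrite /cond ffunE; case: ifP => _; last by rewrite !mul0r mulr0.
  by rewrite le_eqVlt; apply/orP; left; apply/eqP; field.
apply: le_trans (_ : \sum_(A in S) \sum_(s in A) nu s * X s <= _).
  by rewrite [X in _ <= X](bigID P) /= lerDl sumr_ge0.
rewrite -big_trivIset // covS /expect le_eqVlt; apply/orP; left; apply/eqP.
by apply: eq_bigl => s; rewrite inE.
Qed.

End Expectation.

Section Energy.
Variables (R : realType) (Omega : finType) (n : nat).
Notation cfg := (config Omega n).
Notation emp := (emp R).
Implicit Types (V : {set {set 'I_n}}) (B T : {set 'I_n}) (s : cfg).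

Definition energy s V : R := \sum_i \sum_w emp s (pblock V i) w ^+ 2.

Lemma energy_ge0 s V : 0 <= energy s V.
Proof. by apply: sumr_ge0 => i _; apply: sumr_ge0 => w _; exact: sqr_ge0. Qed.

Lemma energy_le s V : energy s V <= n%:R * #|Omega|%:R.
Proof.
apply: le_trans (_ : \sum_(i < n) \sum_(w : Omega) (1 : R) <= _).
  apply: ler_sum => i _; apply: ler_sum => w _.
  by rewrite expr_le1 ?emp_ge0 ?emp_le1.
by rewrite !sumr_const card_ord mulr_natl.
Qed.

Section Refinement.
Variables V V' : {set {set 'I_n}}.
Hypotheses (partV : partition V [set: 'I_n]) (partV' : partition V' [set: 'I_n]).
Hypothesis refV' : forall i, pblock V' i \subset pblock V i.

(* The empirical distribution on a class of [V] is the average of those on the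
   classes of [V'] inside it, so the cross terms vanish. *)
Lemma energyB_refine s :
  energy s V' - energy s V =
  \sum_i \sum_w (emp s (pblock V' i) w - emp s (pblock V i) w) ^+ 2.
Proof.
have /and3P[_ tV _] := partV.
have cross w : \sum_i emp s (pblock V i) w *
    (emp s (pblock V' i) w - emp s (pblock V i) w) = 0.
  rewrite (sum_partition _ partV); apply: big1 => B BV.
  rewrite (eq_bigr (fun i => emp s B w * (emp s (pblock V' i) w - emp s B w))); last first.
    by move=> i iB; rewrite (def_pblock tV BV iB).
  rewrite -mulr_sumr sumrB (@sum_emp_blocks _ _ _ V' B s w partV'); last first.
    by move=> i iB; rewrite -(def_pblock tV BV iB).
  by rewrite sumr_const -mulr_natl mulr_card_emp subrr mulr0.
rewrite /energy -sumrB.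
transitivity (\sum_i (\sum_w (emp s (pblock V' i) w - emp s (pblock V i) w) ^+ 2 +
    2 * \sum_w emp s (pblock V i) w * (emp s (pblock V' i) w - emp s (pblock V i) w))).
  apply: eq_bigr => i _; rewrite mulr_sumr -big_split -sumrB /=.
  by apply: eq_bigr => w _; ring.
rewrite big_split /= -mulr_sumr [X in _ + 2 * X]exchange_big /=.
by rewrite [X in _ + 2 * X]big1 ?mulr0 ?addr0.
Qed.

Lemma energy_gain_subset s B T :
  B \in V -> T \subset B -> (forall i, i \in T -> pblock V' i \subset T) ->
  #|T|%:R * \sum_w (emp s T w - emp s B w) ^+ 2 <=
  \sum_w \sum_(i in T) (emp s (pblock V' i) w - emp s (pblock V i) w) ^+ 2.
Proof.
move=> BV TB V'T; have /and3P[_ tV _] := partV.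
rewrite mulr_sumr; apply: ler_sum => w _.
rewrite (eq_bigr (fun i => (emp s (pblock V' i) w - emp s B w) ^+ 2)); last first.
  by move=> i iT; rewrite (def_pblock tV BV (subsetP TB i iT)).
have sumT : \sum_(i in T) (emp s (pblock V' i) w - emp s B w) =
    #|T|%:R * (emp s T w - emp s B w).
  rewrite sumrB (@sum_emp_blocks _ _ _ V' T s w partV' V'T) sumr_const.
  by rewrite -mulr_card_emp mulrBr; congr (_ - _); rewrite mulr_natl.
have := @sqr_sum_le_card _ _ (mem T) (fun i => emp s (pblock V' i) w - emp s B w).
rewrite /= sumT exprMn => cs.
have [T0 | T_gt0] := posnP #|T|.
  by rewrite T0 mul0r; apply: sumr_ge0 => i _; exact: sqr_ge0.
have T_gt0' : (0 : R) < #|T|%:R by rewrite ltr0n.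
by rewrite -(ler_pM2l T_gt0') mulrA -expr2.
Qed.

Lemma energy_gain_blocks (bad : pred {set 'I_n}) (wit : {set 'I_n} -> {set 'I_n}) s :
  (forall B, B \in V -> bad B ->
     wit B \subset B /\ forall i, i \in wit B -> pblock V' i \subset wit B) ->
  \sum_(B in V | bad B) #|wit B|%:R * \sum_w (emp s (wit B) w - emp s B w) ^+ 2 <=
  energy s V' - energy s V.
Proof.
move=> witP; rewrite energyB_refine (sum_partition _ partV) big_mkcondr /=.
apply: ler_sum => B BV; case: ifP => bB.
  have [wB V'wB] := witP B BV bB.
  apply: le_trans (energy_gain_subset s BV wB V'wB) _.
  by rewrite exchange_big /= ler_sum_subset // => i; apply: sumr_ge0 => w _; exact: sqr_ge0.
by apply: sumr_ge0 => i _; apply: sumr_ge0 => w _; exact: sqr_ge0.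
Qed.

Lemma expected_energy_gain (bad : pred {set 'I_n}) (wit : {set 'I_n} -> {set 'I_n})
    (nu : {ffun cfg -> R}) (eps : R) :
  (0 < #|Omega|)%N -> is_prob nu -> 0 <= eps ->
  (forall B, B \in V -> bad B ->
     [/\ wit B \subset B, forall i, i \in wit B -> pblock V' i \subset wit B,
         eps * #|B|%:R <= #|wit B|%:R &
         eps <= expect nu (fun s => tv (emp s (wit B)) (emp s B))]) ->
  (\sum_(B in V | bad B) #|B|%:R) * (4 * eps ^+ 3 / #|Omega|%:R) <=
  expect nu (fun s => energy s V' - energy s V).
Proof.
move=> Omega_gt0 nu_prob eps_ge0 witP; have [nu_ge0 _] := nu_prob.
have q_gt0 : (0 : R) < #|Omega|%:R by rewrite ltr0n.
have witP' B : B \in V -> bad B ->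
    wit B \subset B /\ forall i, i \in wit B -> pblock V' i \subset wit B.
  by move=> BV bB; have [] := witP B BV bB.
apply: le_trans (ler_expect nu_ge0 (fun s => energy_gain_blocks s witP')).
rewrite expect_sum mulr_suml; apply: ler_sum => B /andP[BV bB].
have [_ _ card_wit tv_wit] := witP B BV bB.
rewrite expectZ.
have dist_ge : 4 / #|Omega|%:R * eps ^+ 2 <=
    expect nu (fun s => \sum_w (emp s (wit B) w - emp s B w) ^+ 2).
  apply: le_trans (_ : 4 / #|Omega|%:R *
      expect nu (fun s => tv (emp s (wit B)) (emp s B) ^+ 2) <= _).
    rewrite ler_wpM2l ?divr_ge0 //; apply: le_trans (sqr_expect_le _ nu_prob).
    by rewrite !expr2 ler_pM.
  rewrite -expectZ; apply: ler_expect => // s.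
  by rewrite mulrAC ler_pdivrMr // [X in _ <= X]mulrC tv_sqr_le.
have -> : #|B|%:R * (4 * eps ^+ 3 / #|Omega|%:R) =
    (eps * #|B|%:R) * (4 / #|Omega|%:R * eps ^+ 2) by rewrite !exprS expr0; ring.
by apply: ler_pM => //; apply: mulr_ge0; rewrite ?divr_ge0 ?sqr_ge0.
Qed.

End Refinement.
End Energy.

(* [card_refinement] combined with [card_grid], as a function of [#|V| = m]
   and [q = #|Omega|]. *)
Definition refine_bound (M q m : nat) : nat := m * 2 ^ ((1 + (M.+1 ^ q) ^ m) * m).

Lemma refine_bound_mono M q : {homo refine_bound M q : m m' / (m <= m')%N}.
Proof.
move=> m m' mm'; rewrite leq_mul // leq_pexp2l // leq_mul // leq_add2l.
by rewrite leq_pexp2l // expn_gt0.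
Qed.

Lemma refine_bound_ge M q m : (m <= refine_bound M q m)%N.
Proof. by rewrite leq_pmulr // expn_gt0. Qed.

Section Construction.
Variables (R : realType) (Omega : finType) (n : nat) (eps : R) (M : nat).
Variable mu : {ffun config Omega n -> R}.
Hypotheses (mu_prob : is_prob mu) (eps_gt0 : 0 < eps) (Omega_gt0 : (0 < #|Omega|)%N).
Notation cfg := (config Omega n).
Notation emp := (emp R).
Notation energy := (@energy R Omega n).
Implicit Types (V : {set {set 'I_n}}) (B T : {set 'I_n}) (nu : {ffun cfg -> R}) (s : cfg).

Let mu_ge0 : forall s, 0 <= mu s. Proof. by case: mu_prob. Qed.

Let rate_ge0 k : 0 <= 4 * eps ^+ k / #|Omega|%:R.
Proof. by rewrite divr_ge0 // mulr_ge0 // exprn_ge0 // ltW. Qed.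

(* [emp s B w * M] rounded down lies in [0, M], so [inord] does not truncate;
   classes outside [V] get the dummy key. *)
Definition grid_key V s : {ffun {set 'I_n} -> {ffun Omega -> 'I_M.+1}} :=
  [ffun B => if B \in V then [ffun w => inord (Num.truncn (emp s B w * M%:R))]
             else [ffun => ord0]].

Definition grid V := preim_partition (grid_key V) [set: cfg].

Lemma grid_partition V : partition (grid V) [set: cfg].
Proof. exact: preim_partitionP. Qed.

Lemma card_grid V : (#|grid V| <= (M.+1 ^ #|Omega|) ^ #|V|)%N.
Proof.
apply: leq_trans (card_preim_partition _ _) _.
have sub : grid_key V @: [set: cfg] \subset pffun_on [ffun => ord0] V predT.
  apply/subsetP => f /imsetP[s _ ->]; apply/pffun_onP; split => //.
  by apply/subsetP => B; rewrite inE ffunE; case: ifP => // _; rewrite eqxx.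
by apply: leq_trans (subset_leq_card sub) _; rewrite card_pffun_on card_ffun card_ord.
Qed.

Lemma grid_emp_close V A B s s' w : (0 < M)%N ->
  A \in grid V -> B \in V -> s \in A -> s' \in A ->
  `|emp s B w - emp s' B w| < M%:R^-1.
Proof.
move=> M_gt0 /imsetP[x _ ->] BV; rewrite !inE => /eqP ex /eqP ex'.
have : grid_key V s B w = grid_key V s' B w by rewrite -ex -ex'.
have key_val t : grid_key V t B w = inord (Num.truncn (emp t B w * M%:R)).
  by rewrite /grid_key ffunE BV ffunE.
rewrite !key_val.
have trunc_lt t : (Num.truncn (emp t B w * M%:R) < M.+1)%N.
  rewrite ltnS truncn_le_nat; apply: le_lt_trans (_ : (M%:R : R) < M.+1%:R); last by rewrite ltr_nat.
  by rewrite -[leRHS]mul1r ler_wpM2r ?emp_le1.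
move/(congr1 val); rewrite /= !inordK ?trunc_lt // => etrunc.
have M_gt0' : (0 : R) < M%:R by rewrite ltr0n.
have := truncn_itv (mulr_ge0 (emp_ge0 R s B w) (ler0n R M)).
have := truncn_itv (mulr_ge0 (emp_ge0 R s' B w) (ler0n R M)).
rewrite etrunc -!natr1 => /andP[a1 a2] /andP[b1 b2].
rewrite -(ltr_pM2r M_gt0') mulVf ?gt_eqF // -[X in `|_| * X < _](gtr0_norm M_gt0').
by rewrite -normrM mulrBl ltr_norml; apply/andP; split; lra.
Qed.

Lemma grid_tv_le V A B s s' : (0 < M)%N ->
  A \in grid V -> B \in V -> s \in A -> s' \in A ->
  tv (emp s B) (emp s' B) <= #|Omega|%:R / M%:R.
Proof.
move=> M_gt0 AV BV sA s'A; rewrite /tv.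
have dist_ge0 : 0 <= \sum_w `|emp s B w - emp s' B w| by apply: sumr_ge0.
apply: le_trans (_ : \sum_w `|emp s B w - emp s' B w| <= _); first lra.
apply: le_trans (_ : \sum_(w : Omega) M%:R^-1 <= _).
  by apply: ler_sum => w _; apply: ltW; exact: grid_emp_close w M_gt0 AV BV sA s'A.
by rewrite sumr_const mulr_natl.
Qed.

Definition irregular_witness nu B := [pick T : {set 'I_n} |
  (T \subset B) && (eps * #|B|%:R <= #|T|%:R) &&
  (eps <= expect nu (fun s => tv (emp s T) (emp s B)))].

Definition regular_block nu B := irregular_witness nu B == None.
Definition witness nu B := odflt set0 (irregular_witness nu B).

Lemma regular_block_regular_on nu B : regular_block nu B -> regular_on eps nu B.
Proof.
rewrite /regular_block /irregular_witness; case: pickP => // noT _ S SB cS.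
by have := noT S; rewrite SB cS /= => /negbT; rewrite -ltNge.
Qed.

Lemma witnessP nu B : ~~ regular_block nu B ->
  [/\ witness nu B \subset B, eps * #|B|%:R <= #|witness nu B|%:R &
      eps <= expect nu (fun s => tv (emp s (witness nu B)) (emp s B))].
Proof.
rewrite /regular_block /witness /irregular_witness.
by case: pickP => // T /andP[/andP[]].
Qed.

Definition few_irregular nu V := \sum_(B in V | ~~ regular_block nu B) #|B|%:R < eps * n%:R.

Lemma few_irregular_regular nu V : few_irregular nu V -> regular_wrt eps nu V.
Proof.
move=> fewV; exists [set B in V | regular_block nu B]; split.
  by apply/subsetP => B; rewrite inE => /andP[].
split; last by move=> B; rewrite inE => /andP[_]; exact: regular_block_regular_on.
apply: le_lt_trans fewV; rewrite le_eqVlt; apply/orP; left; apply/eqP.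
by apply: eq_bigl => B; rewrite !inE; case: (B \in V); rewrite ?andbT ?andbF.
Qed.

Definition homogeneousb V := few_irregular mu V &&
  (\sum_(A in grid V | ~~ few_irregular (cond mu A) V) measure_of mu A < eps).

Lemma homogeneousb_homogeneous V : (0 < M)%N -> #|Omega|%:R / M%:R < eps ->
  homogeneousb V -> homogeneous eps mu V (grid V).
Proof.
move=> M_gt0 gridP /andP[fewV fewS].
exists [set A in grid V | few_irregular (cond mu A) V && (0 < measure_of mu A)].
split; first by apply/subsetP => A; rewrite inE => /andP[].
split; [split | split; [|split]].
- by move=> A; rewrite inE => /andP[_ /andP[]].
- apply: le_lt_trans fewS; rewrite (eq_bigl (fun A => (A \in grid V) &&
      ~~ (few_irregular (cond mu A) V && (0 < measure_of mu A)))); last first.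
    by move=> A; rewrite !inE; case: (A \in grid V); rewrite ?andbT ?andbF.
  rewrite big_mkcondr [X in _ <= X]big_mkcondr /=; apply: ler_sum => A _.
  case: (few_irregular _ _) => //=.
  by case: ifP => //; rewrite -leNgt.
- move=> A B AV BV s s' sA s'A.
  exact: le_lt_trans (grid_tv_le M_gt0 AV BV sA s'A) gridP.
- by move=> A; rewrite inE => /andP[_ /andP[fewA _]]; exact: few_irregular_regular.
- exact: few_irregular_regular.
Qed.

(* The refinement must regularise [mu] and all the conditionals [mu[.|A]],
   [A] in [grid V] at once; they are indexed by [None] and [Some A]. *)
Definition test_measure (x : option {set cfg}) := if x is Some A then cond mu A else mu.
Definition tests V := None |: (Some @: grid V).

Definition witnesses V :=
  [set witness (test_measure p.1) p.2 | p in setX (tests V) V].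

Definition refine_key V (i : 'I_n) := (pblock V i, [set T in witnesses V | i \in T]).

Definition refinement V := preim_partition (refine_key V) [set: 'I_n].

Lemma refinement_partition V : partition (refinement V) [set: 'I_n].
Proof. exact: preim_partitionP. Qed.

Lemma card_refinement V : partition V [set: 'I_n] ->
  (#|refinement V| <= #|V| * 2 ^ ((1 + #|grid V|) * #|V|))%N.
Proof.
move=> /and3P[/eqP covV _ _].
apply: leq_trans (card_preim_partition _ _) _.
have sub : refine_key V @: [set: 'I_n] \subset setX V (powerset (witnesses V)).
  apply/subsetP => f /imsetP[i _ ->]; rewrite inE /= pblock_mem ?covV ?inE //=.
  by apply/subsetP => T; rewrite inE => /andP[].
apply: leq_trans (subset_leq_card sub) _.
rewrite cardsX card_powerset leq_mul2l leq_pexp2l ?orbT //.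
apply: leq_trans (leq_imset_card _ _) _.
rewrite cardsX leq_mul2r cardsU1 leq_add ?orbT ?leq_imset_card //.
by case: (_ \notin _).
Qed.

Lemma mem_pblock_refinement V i j :
  (j \in pblock (refinement V) i) = (refine_key V i == refine_key V j).
Proof.
by apply: pblock_equivalence_partition; rewrite ?inE // => x y z _ _ _; split => // /eqP->.
Qed.

Lemma pblock_refinement_sub V : partition V [set: 'I_n] ->
  forall i, pblock (refinement V) i \subset pblock V i.
Proof.
move=> /and3P[/eqP covV _ _] i; apply/subsetP => j.
by rewrite mem_pblock_refinement => /eqP [-> _]; rewrite mem_pblock covV inE.
Qed.

Lemma refinement_refines V : partition V [set: 'I_n] -> refines (refinement V) V.
Proof.
move=> partV; have /and3P[/eqP covV _ _] := partV.
have /and3P[_ tV' nzV'] := refinement_partition V.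
move=> B BV'; have /set0Pn[i iB] : B != set0 by apply: contraNneq nzV' => <-.
exists (pblock V i); first by rewrite pblock_mem ?covV ?inE.
by rewrite -(def_pblock tV' BV' iB) pblock_refinement_sub.
Qed.

Lemma witness_refinement_closed V x B : x \in tests V -> B \in V ->
  forall i, i \in witness (test_measure x) B ->
  pblock (refinement V) i \subset witness (test_measure x) B.
Proof.
move=> xV BV i iT; apply/subsetP => j; rewrite mem_pblock_refinement => /eqP [_ ekey].
have TW : witness (test_measure x) B \in witnesses V.
  by apply/imsetP; exists (x, B) => //; rewrite inE xV BV.
have : witness (test_measure x) B \in [set T in witnesses V | i \in T] by rewrite inE TW iT.
by rewrite ekey inE => /andP[].
Qed.

Definition mean_energy V := expect mu (fun s => energy s V).

Lemma mean_energy_le V : mean_energy V <= n%:R * #|Omega|%:R.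
Proof.
have [_ mu1] := mu_prob.
apply: le_trans (_ : \sum_s mu s * (n%:R * #|Omega|%:R) <= _).
  by apply: ler_sum => s _; rewrite ler_wpM2l // energy_le.
by rewrite -mulr_suml mu1 mul1r.
Qed.

Lemma energy_gain_test V x : partition V [set: 'I_n] -> x \in tests V ->
  is_prob (test_measure x) -> ~~ few_irregular (test_measure x) V ->
  n%:R * (4 * eps ^+ 4 / #|Omega|%:R) <=
  expect (test_measure x) (fun s => energy s (refinement V) - energy s V).
Proof.
move=> partV xV nu_prob irrV; set nu := test_measure x.
have witP B : B \in V -> ~~ regular_block nu B ->
    [/\ witness nu B \subset B,
        forall i, i \in witness nu B -> pblock (refinement V) i \subset witness nu B,
        eps * #|B|%:R <= #|witness nu B|%:R &
        eps <= expect nu (fun s => tv (emp s (witness nu B)) (emp s B))].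
  by move=> BV bB; have [? ? ?] := witnessP bB; split => //; exact: witness_refinement_closed.
apply: le_trans (expected_energy_gain partV (refinement_partition V)
  (pblock_refinement_sub partV) Omega_gt0 nu_prob (ltW eps_gt0) witP).
have -> : n%:R * (4 * eps ^+ 4 / #|Omega|%:R) =
    eps * n%:R * (4 * eps ^+ 3 / #|Omega|%:R) by rewrite exprS; ring.
by rewrite ler_wpM2r ?rate_ge0 // leNgt.
Qed.

Definition gain_rate : R := 4 * eps ^+ 4 * Num.min eps 1 / #|Omega|%:R.

Lemma mean_energy_increment V : partition V [set: 'I_n] -> ~~ homogeneousb V ->
  n%:R * gain_rate <= mean_energy (refinement V) - mean_energy V.
Proof.
move=> partV notV.
set c := n%:R * (4 * eps ^+ 4 / #|Omega|%:R).
have c_ge0 : 0 <= c by rewrite mulr_ge0 ?rate_ge0.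
have -> : n%:R * gain_rate = c * Num.min eps 1 by rewrite /gain_rate /c; ring.
have gain_ge0 s : 0 <= energy s (refinement V) - energy s V.
  rewrite (energyB_refine _ partV (refinement_partition V) (pblock_refinement_sub partV)).
  by apply: sumr_ge0 => i _; apply: sumr_ge0 => w _; exact: sqr_ge0.
rewrite /mean_energy -expectB.
case/nandP: notV => [irr_mu | ].
  apply: le_trans (energy_gain_test (x := None) partV (setU11 _ _) mu_prob irr_mu).
  by rewrite ler_piMr // ge_min lexx orbT.
rewrite -leNgt => mass_irr.
pose irregular A := ~~ few_irregular (cond mu A) V.
apply: le_trans (sum_measure_expect_cond irregular mu_ge0 gain_ge0 (grid_partition V)).
apply: le_trans (_ : eps * c <= _).
  by rewrite [X in _ <= X]mulrC ler_wpM2l // ge_min lexx.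
apply: le_trans (_ : (\sum_(A in grid V | irregular A) measure_of mu A) * c <= _).
  by rewrite ler_wpM2r.
rewrite mulr_suml; apply: ler_sum => A /andP[AV irrA].
have mA_ge0 : 0 <= measure_of mu A by apply: sumr_ge0.
have [-> | mA_neq0] := eqVneq (measure_of mu A) 0; first by rewrite !mul0r.
have mA_gt0 : 0 < measure_of mu A by rewrite lt_neqAle eq_sym mA_neq0.
rewrite ler_wpM2l //; apply: (@energy_gain_test V (Some A)) => //.
- by rewrite setU1r // imset_f.
- exact: cond_is_prob.
Qed.

Lemma iterated_refinement V0 h0 k : partition V0 [set: 'I_n] -> (#|V0| <= h0)%N ->
  exists V, [/\ partition V [set: 'I_n], refines V V0,
     (#|V| <= iter k (refine_bound M #|Omega|) h0)%N &
     homogeneousb V \/ k%:R * (n%:R * gain_rate) <= mean_energy V].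
Proof.
move=> partV0 cardV0; elim: k => [|k [V [partV refV cardV IHV]]].
  exists V0; split => //; first by move=> B BV; exists B.
  by right; rewrite mul0r; apply: expect_ge0 => // s; exact: energy_ge0.
have [homV | notV] := boolP (homogeneousb V).
  by exists V; split => //; [exact: leq_trans cardV (refine_bound_ge _ _ _) | left].
exists (refinement V); split.
- exact: refinement_partition.
- exact: refines_trans (refinement_refines partV) refV.
- apply: leq_trans (card_refinement partV) _.
  apply: leq_trans (refine_bound_mono M #|Omega| cardV).
  by rewrite leq_mul2l leq_pexp2l ?orbT // leq_mul2r leq_add2l card_grid orbT.
- right; case: IHV => [homV | IHV]; first by rewrite homV in notV.
  have := mean_energy_increment partV notV.
  by rewrite -natr1 mulrDl mul1r; lra.
Qed.

Lemma exists_homogeneous_refinement V0 h0 K : (0 < n)%N -> (0 < M)%N ->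
  #|Omega|%:R / M%:R < eps -> #|Omega|%:R < K%:R * gain_rate ->
  partition V0 [set: 'I_n] -> (#|V0| <= h0)%N ->
  exists V, [/\ partition V [set: 'I_n], refines V V0,
     (#|V| <= iter K (refine_bound M #|Omega|) h0)%N &
     homogeneous eps mu V (grid V)].
Proof.
move=> n_gt0 M_gt0 gridP KP partV0 cardV0.
have [V [partV refV cardV [homV | big_energy]]] := iterated_refinement K partV0 cardV0.
  by exists V; split => //; exact: homogeneousb_homogeneous.
have := mean_energy_le V.
have : n%:R * #|Omega|%:R < n%:R * (K%:R * gain_rate) by rewrite ltr_pM2l ?ltr0n.
lra.
Qed.

End Construction.

Theorem theorem2p1 (R : realType) (Omega : finType) :
  (0 < #|Omega|)%N ->
  forall eps : R, 0 < eps ->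
  exists N : nat, (0 < N)%N /\
    forall n : nat, (N < n)%N ->
    forall mu : {ffun config Omega n -> R}, is_prob mu ->
    forall V0 : {set {set 'I_n}},
      partition V0 [set: 'I_n] -> #|V0|%:R <= eps^-1 ->
      exists (V : {set {set 'I_n}}) (S : {set {set config Omega n}}),
        [/\ partition V [set: 'I_n], refines V V0,
            partition S [set: config Omega n],
            (#|V| + #|S| <= N)%N
          & homogeneous eps mu V S].
Proof.
move=> Omega_gt0 eps eps_gt0.
set q := #|Omega|.
have q_gt0 : (0 : R) < q%:R by rewrite ltr0n.
set M := (Num.truncn (q%:R / eps)).+1.
have gridP : q%:R / M%:R < eps.
  by rewrite ltr_pdivrMr ?ltr0n // mulrC -ltr_pdivrMr // truncnS_gt.
have rate_gt0 : 0 < gain_rate Omega eps.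
  by rewrite divr_gt0 // !mulr_gt0 ?exprn_gt0 // lt_min eps_gt0 ltr01.
set K := (Num.truncn (q%:R / gain_rate Omega eps)).+1.
have KP : q%:R < K%:R * gain_rate Omega eps by rewrite -ltr_pdivrMr // truncnS_gt.
set h := iter K (refine_bound M q) (Num.truncn eps^-1).
exists (h + (M.+1 ^ q) ^ h)%N; split; first by rewrite addn_gt0 !expn_gt0 orbT.
move=> n nN mu mu_prob V0 partV0 cardV0.
have cardV0' : (#|V0| <= Num.truncn eps^-1)%N by rewrite truncn_ge_nat // invr_ge0 ltW.
have [|V [partV refV cardV homV]] :=
  exists_homogeneous_refinement mu_prob eps_gt0 Omega_gt0 _ (ltn0Sn _) gridP KP partV0 cardV0'.
  exact: leq_ltn_trans nN.
exists V, (grid R Omega M V); split => //; first exact: grid_partition.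
by rewrite leq_add // (leq_trans (card_grid _ _ _ _)) // leq_pexp2l // expn_gt0.
Qed.
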